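(* Let $\kappa>0$, $b>0$, $m>7/2$, and let $n\in\mathfrak D\cap H^m(C(\pi))$ with $\|n\|_{H^m}\le C_m$. Then the matrix function $\mathcal Q$ associated with $n$ satisfies $$\|\mathcal Q(x)\|_2\le15(1+\kappa^2)\,b^{-2}(L_mC_m)^2\qquad\text{for all }x\in B(\pi),$$ where $\|\cdot\|_2$ is the spectral norm on $\mathbb C^{6\times6}$.
   Context: $B(r)$ is the open ball of radius $r$ about $0$ in $\mathbb R^3$, $C(\pi)=(-\pi,\pi)^3$. For a fixed $\alpha_0\in(0,1)$, $\mathfrak D:=\{n\in C^{1,\alpha_0}(\mathbb R^3;\mathbb C):\ \mathrm{supp}(1-n)\subset B(\pi),\ \mathrm{Re}(n)\ge b,\ \mathrm{Im}(n)\ge0\}$. For $f$ on $C(\pi)$, $\hat f(\gamma)=(2\pi)^{-3/2}\int_{C(\pi)}f(x)e^{-i\gamma\cdot x}dx$ and $\|f\|^2_{H^m}:=\sum_{\gamma\in\mathbb Z^3}(1+|\gamma|^2)^m|\hat f(\gamma)|^2$. $L_m$ is a constant with $L_m\|f\|_{H^m(C(\pi))}\ge\max_{|\alpha|\le2}\sup_{x\in C(\pi)}|\partial^\alpha f(x)|$ for all $f\in H^m(C(\pi))$. The matrix $\mathcal Q(x)\in\mathbb C^{6\times6}$ is $$\mathcal Q=\kappa^2(1-n)1_6+\frac{i\kappa}{\sqrt n}\begin{pmatrix}0_3&-(\nabla n\times)\\(\nabla n\times)&0_3\end{pmatrix}+\begin{pmatrix}-D\big(\frac{\nabla n}{n}\big)+(n^{-1/2}\Delta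 n^{1/2})1_3&0_3\\0_3&0_3\end{pmatrix},$$ where $1_k,0_k$ are the $k\times k$ identity and zero matrices, $n^{1/2}$ is the principal square root, $D(V)$ is the Jacobian matrix of a vector field $V$, and $(\nabla n\times)$ is the matrix $\begin{pmatrix}0&-\partial_zn&\partial_yn\\\partial_zn&0&-\partial_xn\\-\partial_yn&\partial_xn&0\end{pmatrix}$. *)

From Stdlib Require Import Reals.
From Coquelicot Require Import Coquelicot.
Open Scope R_scope.

Definition R3 : Type := (R * R * R)%type.

Definition coord (i : nat) (p : R3) : R :=
  match i, p with
  | 0%nat, (x, _, _) => x
  | 1%nat, (_, y, _) => y
  | _, (_, _, z) => z
  end.

Definition set_coord (i : nat) (p : R3) (t : R) : R3 :=
  match i, p with
  | 0%nat, (_, y, z) => (t, y, z)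
  | 1%nat, (x, _, z) => (x, t, z)
  | _, (x, y, _) => (x, y, t)
  end.

Definition dot3 (p q : R3) : R :=
  coord 0 p * coord 0 q + coord 1 p * coord 1 q + coord 2 p * coord 2 q.

Definition norm3 (p : R3) : R := sqrt (dot3 p p).

Definition dist3 (p q : R3) : R :=
  sqrt ((coord 0 p - coord 0 q) ^ 2 + (coord 1 p - coord 1 q) ^ 2
        + (coord 2 p - coord 2 q) ^ 2).

(* B(r): open ball of radius r about 0;  C(pi) = (-pi,pi)^3 *)
Definition in_ball (r : R) (p : R3) : Prop := norm3 p < r.
Definition in_cube (p : R3) : Prop :=
  forall i, (i < 3)%nat -> - PI < coord i p < PI.

Definition pdR (i : nat) (g : R3 -> R) (p : R3) : R :=
  Derive (fun t => g (set_coord i p t)) (coord i p).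
Definition ex_pdR (i : nat) (g : R3 -> R) (p : R3) : Prop :=
  ex_derive (fun t => g (set_coord i p t)) (coord i p).

Definition pd (i : nat) (f : R3 -> C) (p : R3) : C :=
  (pdR i (fun q => Re (f q)) p, pdR i (fun q => Im (f q)) p).
Definition ex_pd (i : nat) (f : R3 -> C) (p : R3) : Prop :=
  ex_pdR i (fun q => Re (f q)) p /\ ex_pdR i (fun q => Im (f q)) p.

Definition csqrt (z : C) : C :=
  (sqrt ((Cmod z + Re z) / 2),
   (if Rlt_dec (Im z) 0 then -1 else 1) * sqrt ((Cmod z - Re z) / 2)).

Definition in_supp (g : R3 -> C) (p : R3) : Prop :=
  forall eps, 0 < eps -> exists q, dist3 p q < eps /\ g q <> 0%C.

Definition C1alpha (a : R) (f : R3 -> C) : Prop :=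
  (forall p, continuous f p) /\
  (forall i p, (i < 3)%nat -> ex_pd i f p) /\
  (forall i p, (i < 3)%nat -> continuous (pd i f) p) /\
  (forall i, (i < 3)%nat -> exists K, forall p q, p <> q ->
      Cmod (pd i f p - pd i f q) <= K * Rpower (dist3 p q) a).

Definition in_D (a0 b : R) (n : R3 -> C) : Prop :=
  C1alpha a0 n /\
  (forall p, in_supp (fun q => 1 - n q)%C p -> in_ball PI p) /\
  (forall p, b <= Re (n p)) /\
  (forall p, 0 <= Im (n p)).

Definition int_cube (h : R3 -> R) : R :=
  RInt (fun x => RInt (fun y => RInt (fun z => h (x, y, z)) (- PI) PI)
                      (- PI) PI) (- PI) PI.

Definition zpt (g : Z * Z * Z) : R3 :=
  match g with (a, b, c) => (IZR a, IZR b, IZR c) end.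

Definition fourier (f : R3 -> C) (g : Z * Z * Z) : C :=
  let k := / Rpower (2 * PI) (3 / 2) in
  let e := fun x : R3 => (cos (dot3 (zpt g) x), - sin (dot3 (zpt g) x))%R in
  (k * int_cube (fun x => Re (f x * e x)%C),
   k * int_cube (fun x => Im (f x * e x)%C)).

(* ||f||_{H^m}^2 = sum_{g in Z^3} (1+|g|^2)^m |fhat g|^2  (nonnegative
   terms: supremum of the partial sums over the boxes [-N,N]^3) *)
Definition Hm_term (m : R) (f : R3 -> C) (g : Z * Z * Z) : R :=
  Rpower (1 + dot3 (zpt g) (zpt g)) m * (Cmod (fourier f g)) ^ 2.

Definition box_sum (m : R) (f : R3 -> C) (N : nat) : R :=
  sum_f_R0 (fun a => sum_f_R0 (fun b => sum_f_R0 (fun c =>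
     Hm_term m f ((Z.of_nat a - Z.of_nat N)%Z,
                  (Z.of_nat b - Z.of_nat N)%Z,
                  (Z.of_nat c - Z.of_nat N)%Z)) (2 * N)) (2 * N)) (2 * N).

Definition Hm_norm_sq (m : R) (f : R3 -> C) : Rbar :=
  Lub_Rbar (fun s => exists N, s = box_sum m f N).

Definition Hm_norm (m : R) (f : R3 -> C) : Rbar :=
  match Hm_norm_sq m f with
  | Finite r => Finite (sqrt r)
  | p_infty => p_infty
  | m_infty => m_infty
  end.

(* L is an admissible embedding constant:
   L ||f||_{H^m} >= max_{|alpha|<=2} sup_{C(pi)} |d^alpha f|
   for all f in H^m(C(pi)) (taken as continuous representatives; the
   derivatives up to order 2 are asserted to exist classically). *)
Definition embedding_const (m L : R) : Prop :=
  forall f : R3 -> C,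
    (forall p, continuous f p) ->
    is_finite (Hm_norm m f) ->
    forall p, in_cube p ->
      Cmod (f p) <= L * real (Hm_norm m f) /\
      forall i, (i < 3)%nat ->
        ex_pd i f p /\ Cmod (pd i f p) <= L * real (Hm_norm m f) /\
        forall j, (j < 3)%nat ->
          ex_pd j (pd i f) p /\ Cmod (pd j (pd i f) p) <= L * real (Hm_norm m f).

(* 6x6 complex matrices / vectors indexed by nat (indices 0..5) *)
Definition cmat := nat -> nat -> C.
Definition cvec := nat -> C.

Definition csum6 (h : nat -> C) : C :=
  (h 0%nat + h 1%nat + h 2%nat + h 3%nat + h 4%nat + h 5%nat)%C.

Definition mxapply (A : cmat) (v : cvec) : cvec := fun i => csum6 (fun j => (A i j * v j)%C).

Definition vnorm (v : cvec) : R := sqrt (sum_f_R0 (fun i => (Cmod (v i)) ^ 2) 5).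

Definition spec_norm (A : cmat) : Rbar :=
  Lub_Rbar (fun r => exists v : cvec, vnorm v = 1 /\ r = vnorm (mxapply A v)).

Definition kron (i j : nat) : C := if Nat.eqb i j then 1%C else 0%C.

(* (grad n x) as a 3x3 matrix, indices 0..2 *)
Definition crossmx (n : R3 -> C) (x : R3) (i j : nat) : C :=
  match i, j with
  | 0%nat, 1%nat => (- pd 2 n x)%C
  | 0%nat, 2%nat => pd 1 n x
  | 1%nat, 0%nat => pd 2 n x
  | 1%nat, 2%nat => (- pd 0 n x)%C
  | 2%nat, 0%nat => (- pd 1 n x)%C
  | 2%nat, 1%nat => pd 0 n x
  | _, _ => 0%C
  end.

Definition jac_gradn_over_n (n : R3 -> C) (x : R3) (i j : nat) : C :=
  pd j (fun p => (pd i n p / n p)%C) x.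

Definition lap_sqrtn (n : R3 -> C) (x : R3) : C :=
  let s := fun p => csqrt (n p) in
  (pd 0 (pd 0 s) x + pd 1 (pd 1 s) x + pd 2 (pd 2 s) x)%C.

Definition Qmat (kappa : R) (n : R3 -> C) (x : R3) : cmat :=
  fun a b =>
    let diag := ((RtoC (kappa ^ 2)) * (1 - n x) * kron a b)%C in
    let coef := ((0, kappa) / csqrt (n x))%C in
    if Nat.ltb a 3 then
      if Nat.ltb b 3 then
        (diag - jac_gradn_over_n n x a b
              + (/ csqrt (n x)) * lap_sqrtn n x * kron a b)%C
      else (coef * (- crossmx n x a (b - 3)))%C
    else
      if Nat.ltb b 3 then (coef * crossmx n x (a - 3) b)%C
      else diag.

From Stdlib Require Import Reals Lra Lia Classical.
From Coquelicot Require Import Coquelicot.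
Open Scope R_scope.

(* Every derivative of n up to order two at x is at most M = L_m ||n||_{H^m}, and
   |n| >= Re n >= b, so each entry of Q is bounded by a polynomial in kappa^2, M
   and M/b.  Since n = 1 at a point of C(pi) outside B(pi), b <= 1 <= M, so all
   these bounds are absorbed into (M/b)^2.  Summing the squared entries block by
   block bounds the Frobenius norm, which dominates the spectral norm. *)

Definition is_cderive (f : R -> C) (t : R) (d : C) : Prop :=
  is_derive (fun s => Re (f s)) t (Re d) /\ is_derive (fun s => Im (f s)) t (Im d).

Definition ex_cderive (f : R -> C) (t : R) : Prop :=
  ex_derive (fun s => Re (f s)) t /\ ex_derive (fun s => Im (f s)) t.

Lemma ex_cderive_is_cderive (f : R -> C) t : ex_cderive f t -> exists d, is_cderive f t d.
Proof.
  intros [H1 H2].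
  exists (Derive (fun s => Re (f s)) t, Derive (fun s => Im (f s)) t).
  split; apply Derive_correct; assumption.
Qed.

Lemma is_cderive_ex_cderive (f : R -> C) t d : is_cderive f t d -> ex_cderive f t.
Proof. intros [H1 H2]; split; eexists; eassumption. Qed.

Lemma is_cderive_unique (f : R -> C) t d1 d2 :
  is_cderive f t d1 -> is_cderive f t d2 -> d1 = d2.
Proof.
  intros [H1 H2] [H3 H4].
  apply is_derive_unique in H1, H2, H3, H4.
  destruct d1, d2; unfold Re, Im in *; simpl in *; congruence.
Qed.

Lemma is_cderive_ext (f g : R -> C) t d :
  (forall s, f s = g s) -> is_cderive f t d -> is_cderive g t d.
Proof.
  intros E [H1 H2]; split; eapply is_derive_ext; try eassumption;
    intros s; simpl; rewrite E; reflexivity.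
Qed.

Lemma is_cderive_const (c : C) t : is_cderive (fun _ => c) t 0%C.
Proof. split; [exact (is_derive_const (Re c) t) | exact (is_derive_const (Im c) t)]. Qed.

Lemma is_cderive_mult (f g : R -> C) t df dg :
  is_cderive f t df -> is_cderive g t dg ->
  is_cderive (fun s => f s * g s)%C t (df * g t + f t * dg)%C.
Proof.
  intros [F1 F2] [G1 G2]; unfold is_cderive, Re, Im in *; split.
  - apply is_derive_ext with (f := fun s => fst (f s) * fst (g s) - snd (f s) * snd (g s)).
    { intros s; destruct (f s), (g s); reflexivity. }
    replace (fst (df * g t + f t * dg)%C) with
      ((fst df * fst (g t) + fst (f t) * fst dg) - (snd df * snd (g t) + snd (f t) * snd dg))
      by (destruct df, dg, (f t), (g t); simpl; ring).
    apply (is_derive_minus (fun s => fst (f s) * fst (g s)) (fun s => snd (f s) * snd (g s)));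
      apply (is_derive_mult (fun s => _ (f s)) (fun s => _ (g s))); auto using Rmult_comm.
  - apply is_derive_ext with (f := fun s => fst (f s) * snd (g s) + snd (f s) * fst (g s)).
    { intros s; destruct (f s), (g s); reflexivity. }
    replace (snd (df * g t + f t * dg)%C) with
      ((fst df * snd (g t) + fst (f t) * snd dg) + (snd df * fst (g t) + snd (f t) * fst dg))
      by (destruct df, dg, (f t), (g t); simpl; ring).
    apply (is_derive_plus (fun s => fst (f s) * snd (g s)) (fun s => snd (f s) * fst (g s)));
      apply (is_derive_mult (fun s => _ (f s)) (fun s => _ (g s))); auto using Rmult_comm.
Qed.

Lemma is_cderive_inv (f : R -> C) t df :
  (forall s, f s <> 0%C) -> is_cderive f t df ->
  is_cderive (fun s => / f s)%C t (- df / (f t * f t))%C.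
Proof.
  intros Hnz Hf.
  destruct (is_cderive_ex_cderive _ _ _ Hf) as [ERe EIm].
  assert (Hden : forall s, 0 < Re (f s) ^ 2 + Im (f s) ^ 2).
  { intros s. rewrite <- Cmod2_alt. apply pow_lt, Cmod_gt_0, Hnz. }
  assert (Eden : ex_derive (fun s => Re (f s) ^ 2 + Im (f s) ^ 2) t).
  { apply (ex_derive_plus (fun s => Re (f s) ^ 2) (fun s => Im (f s) ^ 2));
      apply ex_derive_pow; assumption. }
  destruct (ex_cderive_is_cderive (fun s => / f s)%C t) as [d Hd].
  { split.
    - apply (ex_derive_div (fun s => Re (f s))); auto. apply Rgt_not_eq, Hden.
    - apply (ex_derive_div (fun s => - Im (f s))); auto.
      + apply (ex_derive_opp (fun s => Im (f s))); assumption.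
      + apply Rgt_not_eq, Hden. }
  (* Having shown that the derivative exists, read it off by differentiating [/ f * f = 1]. *)
  assert (Hone : is_cderive (fun s => / f s * f s)%C t 0%C).
  { apply is_cderive_ext with (fun _ => 1%C); [|apply is_cderive_const].
    intros s; field; apply Hnz. }
  pose proof (is_cderive_unique _ _ _ _ (is_cderive_mult _ _ _ _ _ Hd Hf) Hone) as E.
  replace (- df / (f t * f t))%C with d; [assumption|].
  assert (Ht := Hnz t).
  transitivity ((d * f t + / f t * df - / f t * df) / f t)%C; [field; assumption|].
  rewrite E. field. assumption.
Qed.

Lemma is_cderive_div (f g : R -> C) t df dg :
  (forall s, g s <> 0%C) -> is_cderive f t df -> is_cderive g t dg ->
  is_cderive (fun s => f s / g s)%C t ((df * g t - f t * dg) / (g t * g t))%C.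
Proof.
  intros Hnz Hf Hg.
  pose proof (is_cderive_mult _ _ _ _ _ Hf (is_cderive_inv _ _ _ Hnz Hg)) as H.
  replace ((df * g t - f t * dg) / (g t * g t))%C
    with (df * / g t + f t * (- dg / (g t * g t)))%C by (field; apply Hnz).
  exact H.
Qed.

Lemma Re_le_Cmod (z : C) : Re z <= Cmod z.
Proof. eapply Rle_trans; [apply Rle_abs|apply re_le_Cmod]. Qed.

Lemma Re_csqrt_gt0 (z : C) : 0 < Re z -> 0 < Re (csqrt z).
Proof.
  intros Hz. apply sqrt_lt_R0. assert (H := Re_le_Cmod z). lra.
Qed.

Lemma Re_csqrt_sqr (z : C) : 0 < Re z -> Re (csqrt z) * Re (csqrt z) = (Cmod z + Re z) / 2.
Proof.
  intros Hz. apply sqrt_sqrt. assert (H := Re_le_Cmod z). lra.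
Qed.

Lemma Im_csqrt (z : C) : 0 < Re z -> Im (csqrt z) = Im z / (2 * Re (csqrt z)).
Proof.
  intros Hz.
  assert (Ha := Re_csqrt_gt0 z Hz). assert (Ha2 := Re_csqrt_sqr z Hz).
  assert (Hc := Cmod2_alt z).
  set (a := Re (csqrt z)) in *. set (w := Im z / (2 * a)).
  assert (Hw : (Cmod z - Re z) / 2 = w * w).
  { unfold w. apply Rmult_eq_reg_r with (4 * (a * a)); [|nra].
    field_simplify; [|lra]. nra. }
  unfold csqrt at 1, Im at 1; simpl. rewrite Hw.
  change (w * w) with (Rsqr w). rewrite sqrt_Rsqr_abs.
  unfold w. destruct (Rlt_dec (Im z) 0).
  - rewrite Rabs_left; [lra|]. apply Rdiv_neg_pos; lra.
  - rewrite Rabs_right; [lra|]. apply Rle_ge, Rdiv_le_0_compat; lra.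
Qed.

Lemma csqrt_sqr (z : C) : 0 < Re z -> (csqrt z * csqrt z = z)%C.
Proof.
  intros Hz.
  assert (Ha := Re_csqrt_gt0 z Hz). assert (Ha2 := Re_csqrt_sqr z Hz).
  assert (Hi := Im_csqrt z Hz). assert (Hc := Cmod2_alt z).
  destruct (csqrt z) as [a c], z as [x y]; unfold Re, Im in *; simpl in *.
  subst c. unfold Cmult; simpl. f_equal.
  - apply Rmult_eq_reg_r with (4 * (a * a)); [|nra].
    field_simplify; [|lra]. nra.
  - field. lra.
Qed.

Lemma csqrt_neq0 (z : C) : 0 < Re z -> csqrt z <> 0%C.
Proof. intros Hz E. assert (H := Re_csqrt_gt0 z Hz). rewrite E in H. simpl in H. lra. Qed.

Lemma ex_derive_sqrt (g : R -> R) t :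
  ex_derive g t -> 0 < g t -> ex_derive (fun s => sqrt (g s)) t.
Proof. intros [d H] Hp. eexists. apply is_derive_sqrt; eassumption. Qed.

Lemma is_cderive_csqrt (f : R -> C) t df :
  (forall s, 0 < Re (f s)) -> is_cderive f t df ->
  is_cderive (fun s => csqrt (f s)) t (df / (2 * csqrt (f t)))%C.
Proof.
  intros Hpos Hf.
  destruct (is_cderive_ex_cderive _ _ _ Hf) as [ERe EIm].
  assert (Ecmod : ex_derive (fun s => Cmod (f s)) t).
  { apply ex_derive_sqrt.
    - apply (ex_derive_plus (fun s => Re (f s) ^ 2) (fun s => Im (f s) ^ 2));
        apply ex_derive_pow; assumption.
    - change (0 < Re (f t) ^ 2 + Im (f t) ^ 2).
      assert (H := Hpos t). assert (0 <= Im (f t) ^ 2) by apply pow2_ge_0. nra. }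
  assert (ERes : ex_derive (fun s => Re (csqrt (f s))) t).
  { apply ex_derive_sqrt.
    - apply (ex_derive_div (fun s => Cmod (f s) + Re (f s))).
      + apply (ex_derive_plus (fun s => Cmod (f s)) (fun s => Re (f s))); assumption.
      + apply ex_derive_const.
      + lra.
    - assert (H := Hpos t). assert (H0 := Cmod_ge_0 (f t)). lra. }
  destruct (ex_cderive_is_cderive (fun s => csqrt (f s)) t) as [d Hd].
  { split; [assumption|].
    apply ex_derive_ext with (fun s => Im (f s) / (2 * Re (csqrt (f s)))).
    { intros s. symmetry. apply Im_csqrt, Hpos. }
    apply (ex_derive_div (fun s => Im (f s))); [assumption| |].
    - apply (ex_derive_mult (fun _ => 2)); [apply ex_derive_const|assumption].
    - assert (H := Re_csqrt_gt0 _ (Hpos t)). lra. }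
  assert (Hsq : is_cderive (fun s => csqrt (f s) * csqrt (f s))%C t df).
  { apply is_cderive_ext with f; [|assumption]. intros s. symmetry. apply csqrt_sqr, Hpos. }
  pose proof (is_cderive_unique _ _ _ _ (is_cderive_mult _ _ _ _ _ Hd Hd) Hsq) as E.
  rewrite <- E.
  replace ((d * csqrt (f t) + csqrt (f t) * d) / (2 * csqrt (f t)))%C with d; [assumption|].
  field. apply csqrt_neq0, Hpos.
Qed.

Lemma set_coord_coord i p : set_coord i p (coord i p) = p.
Proof. destruct p as [[x y] z]; destruct i as [|[|i]]; reflexivity. Qed.

Lemma pd_is_cderive i (g : R3 -> C) p d :
  is_cderive (fun t => g (set_coord i p t)) (coord i p) d -> pd i g p = d.
Proof.
  intros [H1 H2]. apply is_derive_unique in H1, H2.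
  destruct d as [d1 d2]. unfold pd, pdR. f_equal; assumption.
Qed.

Lemma is_cderive_pd i (g : R3 -> C) p :
  ex_pd i g p -> is_cderive (fun t => g (set_coord i p t)) (coord i p) (pd i g p).
Proof. intros [H1 H2]. split; apply Derive_correct; assumption. Qed.

Lemma pd_ext i (f g : R3 -> C) p : (forall q, f q = g q) -> pd i f p = pd i g p.
Proof.
  intros E. unfold pd, pdR.
  f_equal; apply Derive_ext; intros t; rewrite E; reflexivity.
Qed.

Lemma pd_div j (f g : R3 -> C) p :
  (forall q, g q <> 0%C) -> ex_pd j f p -> ex_pd j g p ->
  pd j (fun q => f q / g q)%C p = ((pd j f p * g p - f p * pd j g p) / (g p * g p))%C.
Proof.
  intros Hnz Hf Hg. apply pd_is_cderive.
  pose proof (is_cderive_div _ _ _ _ _ (fun s => Hnz (set_coord j p s))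
                (is_cderive_pd _ _ _ Hf) (is_cderive_pd _ _ _ Hg)) as H.
  cbv beta in H; rewrite set_coord_coord in H. exact H.
Qed.

Lemma pd_csqrt j (f : R3 -> C) p :
  (forall q, 0 < Re (f q)) -> ex_pd j f p ->
  pd j (fun q => csqrt (f q)) p = (pd j f p / (2 * csqrt (f p)))%C.
Proof.
  intros Hpos Hf. apply pd_is_cderive.
  pose proof (is_cderive_csqrt _ _ _ (fun s => Hpos (set_coord j p s))
                (is_cderive_pd _ _ _ Hf)) as H.
  cbv beta in H; rewrite set_coord_coord in H. exact H.
Qed.

Lemma inv_csqrt_pd_pd_csqrt j (f : R3 -> C) p :
  (forall q, 0 < Re (f q)) -> (forall q, ex_pd j f q) -> ex_pd j (pd j f) p ->
  (/ csqrt (f p) * pd j (pd j (fun q => csqrt (f q))) p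
   = pd j (pd j f) p / (2 * f p) - pd j f p * pd j f p / (4 * (f p * f p)))%C.
Proof.
  intros Hpos Hf Hff.
  pose proof (is_cderive_mult _ _ _ _ _ (is_cderive_const 2%C (coord j p))
    (is_cderive_csqrt _ _ _ (fun s => Hpos (set_coord j p s)) (is_cderive_pd _ _ _ (Hf p))))
    as Hs.
  cbv beta in Hs; rewrite set_coord_coord in Hs.
  assert (Hnz : forall q, (2 * csqrt (f q))%C <> 0%C).
  { intros q. apply Cmult_neq_0; [|apply csqrt_neq0, Hpos].
    intros E; injection E; lra. }
  rewrite (pd_ext j _ (fun q => pd j f q / (2 * csqrt (f q)))%C)
    by (intros q; apply pd_csqrt; auto).
  rewrite (pd_is_cderive _ _ _ _
    (is_cderive_div _ _ _ _ _ (fun s => Hnz (set_coord j p s)) (is_cderive_pd _ _ _ Hff) Hs)).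
  rewrite set_coord_coord.
  pose proof (csqrt_sqr _ (Hpos p)) as Hsq. pose proof (csqrt_neq0 _ (Hpos p)) as Hs0.
  set (s0 := csqrt (f p)) in *. rewrite <- Hsq.
  field. assumption.
Qed.

(* Lagrange's identity exhibits the difference as a sum of squares. *)
Lemma Cauchy_Schwarz6 (x0 x1 x2 x3 x4 x5 y0 y1 y2 y3 y4 y5 : R) :
  (x0*y0 + x1*y1 + x2*y2 + x3*y3 + x4*y4 + x5*y5) ^ 2 <=
  (x0^2 + x1^2 + x2^2 + x3^2 + x4^2 + x5^2) * (y0^2 + y1^2 + y2^2 + y3^2 + y4^2 + y5^2).
Proof.
  assert (Hsq : forall u, 0 <= u ^ 2) by (intros; apply pow2_ge_0).
  assert (0 <= (x0*y1-x1*y0)^2 + (x0*y2-x2*y0)^2 + (x0*y3-x3*y0)^2 + (x0*y4-x4*y0)^2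
    + (x0*y5-x5*y0)^2 + (x1*y2-x2*y1)^2 + (x1*y3-x3*y1)^2 + (x1*y4-x4*y1)^2
    + (x1*y5-x5*y1)^2 + (x2*y3-x3*y2)^2 + (x2*y4-x4*y2)^2 + (x2*y5-x5*y2)^2
    + (x3*y4-x4*y3)^2 + (x3*y5-x5*y3)^2 + (x4*y5-x5*y4)^2)
    by (repeat apply Rplus_le_le_0_compat; apply Hsq).
  lra.
Qed.

Definition row_norm_sq (A : cmat) (i : nat) : R := sum_f_R0 (fun j => Cmod (A i j) ^ 2) 5.

Definition frobenius_sq (A : cmat) : R := sum_f_R0 (row_norm_sq A) 5.

Lemma Cmod_mxapply_sq (A : cmat) (v : cvec) i :
  Cmod (mxapply A v i) ^ 2 <= row_norm_sq A i * sum_f_R0 (fun j => Cmod (v j) ^ 2) 5.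
Proof.
  unfold mxapply, csum6, row_norm_sq. simpl sum_f_R0.
  eapply Rle_trans; [|apply Cauchy_Schwarz6].
  apply pow_incr. split; [apply Cmod_ge_0|].
  rewrite <- !Cmod_mult.
  repeat (eapply Rle_trans; [apply Cmod_triangle|]; apply Rplus_le_compat_r).
  apply Rle_refl.
Qed.

Lemma spec_norm_le_frobenius (A : cmat) :
  Rbar_le (spec_norm A) (Finite (sqrt (frobenius_sq A))).
Proof.
  apply Lub_Rbar_correct. intros r [v [Hv ->]]. simpl. unfold vnorm in *.
  apply sqrt_le_1_alt.
  assert (Hv1 : sum_f_R0 (fun j => Cmod (v j) ^ 2) 5 = 1).
  { rewrite <- (sqrt_sqrt (sum_f_R0 _ 5)), Hv; [ring|].
    apply cond_pos_sum. intros; apply pow2_ge_0. }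
  unfold frobenius_sq. apply sum_Rle. intros i _.
  rewrite <- (Rmult_1_r (row_norm_sq A i)), <- Hv1. apply Cmod_mxapply_sq.
Qed.

Lemma frobenius_sq_le (A : cmat) (B : nat -> nat -> R) :
  (forall i j, (i <= 5)%nat -> (j <= 5)%nat -> Cmod (A i j) ^ 2 <= B i j) ->
  frobenius_sq A <= sum_f_R0 (fun i => sum_f_R0 (B i) 5) 5.
Proof.
  intros H. apply sum_Rle. intros i Hi. apply sum_Rle. intros j Hj. apply H; assumption.
Qed.

Lemma Cmod_RtoC_pos (r : R) : 0 <= r -> Cmod (RtoC r) = r.
Proof. intros Hr. rewrite Cmod_R. apply Rabs_pos_eq, Hr. Qed.

Lemma Rdiv_le_compat (a c M b : R) :
  0 <= a -> 0 < b -> a <= M -> b <= c -> a / c <= M / b.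
Proof.
  intros Ha Hb HaM Hbc. apply Rle_trans with (M / c).
  - apply Rmult_le_compat_r; [left; apply Rinv_0_lt_compat|]; lra.
  - apply Rmult_le_compat_l; [lra|]. apply Rinv_le_contravar; lra.
Qed.

Lemma Cmod_div_le (a z : C) (M b : R) :
  0 < b -> Cmod a <= M -> b <= Cmod z -> Cmod (a / z)%C <= M / b.
Proof.
  intros Hb Ha Hz. rewrite Cmod_div by (apply Cmod_gt_0; lra).
  apply Rdiv_le_compat; auto using Cmod_ge_0.
Qed.

Lemma Cmod_mult_le (z w : C) (M N : R) : Cmod z <= M -> Cmod w <= N -> Cmod (z * w)%C <= M * N.
Proof.
  intros Hz Hw. rewrite Cmod_mult.
  apply Rmult_le_compat; auto using Cmod_ge_0.
Qed.

Lemma Cmod_mult_ge (z w : C) (b c : R) :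
  0 <= b -> 0 <= c -> b <= Cmod z -> c <= Cmod w -> b * c <= Cmod (z * w)%C.
Proof. intros Hb Hc Hz Hw. rewrite Cmod_mult. apply Rmult_le_compat; assumption. Qed.

Lemma Cmod_kron_le a c : Cmod (kron a c) <= 1.
Proof. unfold kron. destruct (Nat.eqb a c); [rewrite Cmod_1|rewrite Cmod_0]; lra. Qed.

Lemma Cmod_sub_le (z w : C) : Cmod (z - w)%C <= Cmod z + Cmod w.
Proof. unfold Cminus. rewrite <- (Cmod_opp w). apply Cmod_triangle. Qed.

Definition block_bound (tl off br : R) (a c : nat) : R :=
  if Nat.ltb a 3 then (if Nat.ltb c 3 then tl else off)
  else (if Nat.ltb c 3 then off else br).

Section QmatEntries.

Variables (kappa b M : R) (n : R3 -> C) (x : R3).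
Hypotheses (Hkappa : 0 < kappa) (Hb : 0 < b)
  (Hre : forall p, b <= Re (n p))
  (Hex : forall i p, (i < 3)%nat -> ex_pd i n p)
  (Hn : Cmod (n x) <= M)
  (Hd : forall i, (i < 3)%nat -> Cmod (pd i n x) <= M)
  (Hdd : forall i j, (i < 3)%nat -> (j < 3)%nat ->
           ex_pd j (pd i n) x /\ Cmod (pd j (pd i n) x) <= M).

Let u := M / b.

Lemma Re_n_pos p : 0 < Re (n p).
Proof. specialize (Hre p). lra. Qed.

Lemma Cmod_n_ge : b <= Cmod (n x).
Proof.
  eapply Rle_trans; [apply Hre|apply Re_le_Cmod].
Qed.

Lemma n_neq0 p : n p <> 0%C.
Proof. intros E. assert (H := Re_n_pos p). rewrite E in H. simpl in H. lra. Qed.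

Lemma Cmod_jac_le i j : (i < 3)%nat -> (j < 3)%nat ->
  Cmod (jac_gradn_over_n n x i j) <= u + u * u.
Proof.
  intros Hi Hj. unfold jac_gradn_over_n.
  rewrite pd_div by (auto using n_neq0; apply Hdd; assumption).
  replace ((pd j (pd i n) x * n x - pd i n x * pd j n x) / (n x * n x))%C
    with (pd j (pd i n) x / n x - pd i n x * pd j n x / (n x * n x))%C
    by (field; apply n_neq0).
  assert (Hnx := Cmod_n_ge).
  eapply Rle_trans; [apply Cmod_sub_le|]. unfold u.
  replace (M / b * (M / b)) with (M * M / (b * b)) by (field; lra).
  apply Rplus_le_compat; apply Cmod_div_le;
    auto using Cmod_mult_le, Cmod_mult_ge, Rmult_lt_0_compat, Rlt_le; apply Hdd; assumption.
Qed.

Lemma Cmod_lap_term_le j : (j < 3)%nat ->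
  Cmod (/ csqrt (n x) * pd j (pd j (fun p => csqrt (n p))) x)%C <= u / 2 + u * u / 4.
Proof.
  intros Hj.
  rewrite inv_csqrt_pd_pd_csqrt by (auto using Re_n_pos; apply Hdd; assumption).
  assert (Hnx := Cmod_n_ge).
  eapply Rle_trans; [apply Cmod_sub_le|]. unfold u.
  replace (M / b / 2 + M / b * (M / b) / 4) with (M / (2 * b) + M * M / (4 * (b * b)))
    by (field; lra).
  apply Rplus_le_compat; apply Cmod_div_le;
    try (apply Rmult_lt_0_compat; lra); auto using Cmod_mult_le; try (apply Hdd; assumption).
  - apply Cmod_mult_ge; try lra. rewrite Cmod_RtoC_pos; lra.
  - nra.
  - apply Cmod_mult_ge; try nra; [rewrite Cmod_RtoC_pos; lra|].
    apply Cmod_mult_ge; lra.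
Qed.

Lemma Cmod_diag_le a c :
  Cmod (RtoC (kappa ^ 2) * (1 - n x) * kron a c)%C <= kappa ^ 2 * (1 + M).
Proof.
  assert (Hk : 0 < kappa ^ 2) by (apply pow_lt; lra).
  rewrite <- (Rmult_1_r (kappa ^ 2 * (1 + M))).
  apply Cmod_mult_le; [apply Cmod_mult_le|apply Cmod_kron_le].
  - rewrite Cmod_RtoC_pos; lra.
  - eapply Rle_trans; [apply Cmod_sub_le|]. rewrite Cmod_1. lra.
Qed.

Lemma Cmod_crossmx_le i j : Cmod (crossmx n x i j) <= M.
Proof.
  assert (H0 := Hd 0%nat ltac:(lia)). assert (H1 := Hd 1%nat ltac:(lia)).
  assert (H2 := Hd 2%nat ltac:(lia)). assert (HM := Rle_trans _ _ _ (Cmod_ge_0 _) Hn).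
  destruct i as [|[|[|i]]]; destruct j as [|[|[|j]]]; simpl crossmx;
    rewrite ?Cmod_opp, ?Cmod_0; assumption.
Qed.

(* [|i kappa / sqrt n|^2 = kappa^2 / |n|] since the square root squares back to [n]. *)
Lemma Cmod_offdiag_sq_le (d : C) :
  Cmod d <= M -> Cmod ((0, kappa) / csqrt (n x) * d)%C ^ 2 <= kappa ^ 2 * M * u.
Proof.
  intros Hdm. assert (Hnx := Cmod_n_ge).
  assert (Hs : Cmod (csqrt (n x)) ^ 2 = Cmod (n x)).
  { rewrite <- (csqrt_sqr (n x) (Re_n_pos x)) at 2. rewrite Cmod_mult. ring. }
  assert (Hk : Cmod (0, kappa) = kappa).
  { unfold Cmod; simpl.
    replace (0 * (0 * 1) + kappa * (kappa * 1)) with (kappa * kappa) by ring.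
    apply sqrt_square; lra. }
  assert (Hs0 : Cmod (csqrt (n x)) <> 0)
    by (apply Rgt_not_eq, Cmod_gt_0, csqrt_neq0, Re_n_pos).
  rewrite Cmod_mult, Cmod_div, Hk by (apply csqrt_neq0, Re_n_pos).
  replace ((kappa / Cmod (csqrt (n x)) * Cmod d) ^ 2)
    with (kappa ^ 2 * Cmod d ^ 2 / Cmod (n x)) by (rewrite <- Hs; field; assumption).
  unfold u. replace (kappa ^ 2 * M * (M / b)) with (kappa ^ 2 * M ^ 2 / b) by (field; lra).
  assert (H0 := Cmod_ge_0 d).
  apply Rdiv_le_compat; try assumption.
  - apply Rmult_le_pos; apply pow_le; lra.
  - apply Rmult_le_compat_l; [apply pow_le; lra|]. apply pow_incr; lra.
Qed.

Lemma Cmod_lap_le : Cmod (/ csqrt (n x) * lap_sqrtn n x)%C <= 3 * (u / 2 + u * u / 4).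
Proof.
  unfold lap_sqrtn. rewrite !Cmult_plus_distr_l.
  assert (H0 := Cmod_lap_term_le 0 ltac:(lia)). assert (H1 := Cmod_lap_term_le 1 ltac:(lia)).
  assert (H2 := Cmod_lap_term_le 2 ltac:(lia)).
  eapply Rle_trans; [apply Cmod_triangle|].
  eapply Rle_trans; [apply Rplus_le_compat_r, Cmod_triangle|]. lra.
Qed.

Lemma Qmat_entry_sq_le a c :
  Cmod (Qmat kappa n x a c) ^ 2 <=
  block_bound ((kappa ^ 2 * (1 + M) + (u + u * u) + 3 * (u / 2 + u * u / 4)) ^ 2)
              (kappa ^ 2 * M * u) ((kappa ^ 2 * (1 + M)) ^ 2) a c.
Proof.
  unfold Qmat, block_bound; cbv zeta.
  destruct (Nat.ltb_spec a 3), (Nat.ltb_spec c 3).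
  - apply pow_incr. split; [apply Cmod_ge_0|].
    eapply Rle_trans; [apply Cmod_triangle|].
    apply Rplus_le_compat; [eapply Rle_trans; [apply Cmod_sub_le|]|].
    + apply Rplus_le_compat; [apply Cmod_diag_le|apply Cmod_jac_le; assumption].
    + rewrite <- (Rmult_1_r (3 * _)). apply Cmod_mult_le; [apply Cmod_lap_le|apply Cmod_kron_le].
  - apply Cmod_offdiag_sq_le. rewrite Cmod_opp. apply Cmod_crossmx_le.
  - apply Cmod_offdiag_sq_le, Cmod_crossmx_le.
  - apply pow_incr. split; [apply Cmod_ge_0|apply Cmod_diag_le].
Qed.

End QmatEntries.

Lemma spec_norm_le_block_bound (A : cmat) (tl off br T : R) :
  (forall a c, Cmod (A a c) ^ 2 <= block_bound tl off br a c) ->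
  sqrt (9 * tl + 18 * off + 9 * br) <= T -> Rbar_le (spec_norm A) (Finite T).
Proof.
  intros HA HT.
  eapply Rbar_le_trans; [apply spec_norm_le_frobenius|]. simpl.
  eapply Rle_trans; [apply sqrt_le_1_alt|exact HT].
  eapply Rle_trans; [apply (frobenius_sq_le A (block_bound tl off br)); auto|].
  unfold block_bound; simpl. lra.
Qed.

Lemma Qmat_numeric (K M u : R) : 0 <= K -> 0 <= M <= u -> 1 <= u ->
  9 * (K * (1 + M) + (u + u * u) + 3 * (u / 2 + u * u / 4)) ^ 2 + 18 * (K * M * u)
  + 9 * (K * (1 + M)) ^ 2 <= (15 * (1 + K) * (u * u)) ^ 2.
Proof.
  intros HK [HM HMu] Hu.
  set (w := u * u).
  assert (Huw : u <= w) by (unfold w; nra).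
  assert (Htl : 0 <= K * (1 + M) + (u + w) + 3 * (u / 2 + w / 4) <= (2 * K + 17 / 4) * w)
    by nra.
  assert (Hbr : 0 <= K * (1 + M) <= 2 * K * w) by nra.
  assert (HMw : M * u <= w * w) by (apply Rmult_le_compat; lra).
  assert (Hoff : K * M * u <= K * (w * w))
    by (rewrite Rmult_assoc; apply Rmult_le_compat_l; lra).
  assert (Htl2 := pow_incr _ _ 2 Htl). assert (Hbr2 := pow_incr _ _ 2 Hbr).
  assert (0 <= K * (w * w)) by nra.
  nra.
Qed.

Lemma Qmat_block_sum_le (kappa b M N : R) : 0 < b <= 1 -> 1 <= M <= N ->
  sqrt (9 * (kappa ^ 2 * (1 + M) + (M / b + M / b * (M / b))
             + 3 * (M / b / 2 + M / b * (M / b) / 4)) ^ 2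
        + 18 * (kappa ^ 2 * M * (M / b)) + 9 * (kappa ^ 2 * (1 + M)) ^ 2)
  <= 15 * (1 + kappa ^ 2) * / b ^ 2 * N ^ 2.
Proof.
  intros Hb HMN.
  assert (HK : 0 <= kappa ^ 2) by apply pow2_ge_0.
  assert (Hu : M <= M / b) by (apply Rmult_le_reg_r with b; [lra|]; field_simplify; nra).
  assert (HuN : M / b <= N / b)
    by (apply Rmult_le_compat_r; [left; apply Rinv_0_lt_compat|]; lra).
  eapply Rle_trans; [apply sqrt_le_1_alt, Qmat_numeric; lra|].
  rewrite sqrt_pow2 by nra.
  replace (15 * (1 + kappa ^ 2) * / b ^ 2 * N ^ 2)
    with (15 * (1 + kappa ^ 2) * ((N / b) * (N / b))) by (field; lra).
  apply Rmult_le_compat_l; [lra|]. apply Rmult_le_compat; lra.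
Qed.

(* A point of C(pi) outside B(pi), where the support condition forces [n = 1]. *)
Definition corner : R3 := (3, 3, 0).

Lemma corner_in_cube : in_cube corner.
Proof.
  assert (HPI := PI2_3_2).
  intros i Hi. destruct i as [|[|[|i]]]; simpl; lra || lia.
Qed.

Lemma corner_notin_ball : ~ in_ball PI corner.
Proof.
  unfold in_ball, norm3, dot3; simpl. intros H.
  assert (H4 : sqrt (4 * 4) <= sqrt (3 * 3 + 3 * 3 + 0 * 0)) by (apply sqrt_le_1_alt; lra).
  rewrite sqrt_square in H4 by lra. assert (HPI := PI_4). lra.
Qed.

Lemma in_D_corner (a b : R) (n : R3 -> C) : in_D a b n -> n corner = 1%C.
Proof.
  intros [_ [Hsupp _]]. apply NNPP. intros Hne.
  apply corner_notin_ball, Hsupp. intros eps Heps. exists corner. split.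
  - unfold dist3. replace (_ + _ + _) with 0 by ring. rewrite sqrt_0. assumption.
  - intros E. apply Hne. rewrite <- (Cplus_0_r (n corner)), <- E. ring.
Qed.

Lemma in_ball_in_cube (p : R3) : in_ball PI p -> in_cube p.
Proof.
  unfold in_ball, norm3, dot3, in_cube. intros H i Hi.
  destruct p as [[x0 x1] x2]; simpl in H.
  assert (HP : 0 < PI) by apply PI_RGT_0.
  assert (Hs : forall c, c * c <= x0 * x0 + x1 * x1 + x2 * x2 -> -PI < c < PI).
  { intros c Hc. split; apply Rnot_le_lt; intro Hc2;
    (assert (PI * PI <= x0 * x0 + x1 * x1 + x2 * x2) by nra);
    assert (sqrt (PI * PI) <= sqrt (x0 * x0 + x1 * x1 + x2 * x2)) by (apply sqrt_le_1_alt; auto);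
    rewrite sqrt_square in * by lra; lra. }
  destruct i as [|[|[|i]]]; simpl; apply Hs; nra.
Qed.

Lemma in_D_le_1 (a b : R) (n : R3 -> C) : in_D a b n -> b <= 1.
Proof.
  intros HD. pose proof (in_D_corner _ _ _ HD) as Hcorner.
  destruct HD as [_ [_ [Hre _]]]. specialize (Hre corner). rewrite Hcorner in Hre. exact Hre.
Qed.

Lemma embedding_bound_ge_1 (a b m L : R) (n : R3 -> C) :
  embedding_const m L -> in_D a b n -> is_finite (Hm_norm m n) ->
  1 <= L * real (Hm_norm m n).
Proof.
  intros HL HD Hfin. pose proof (in_D_corner _ _ _ HD) as Hcorner.
  destruct HD as [[Hcont _] _].
  destruct (HL n Hcont Hfin corner corner_in_cube) as [H _].
  rewrite Hcorner, Cmod_1 in H. exact H.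
Qed.

Lemma Hm_norm_nonneg (m : R) (f : R3 -> C) : is_finite (Hm_norm m f) -> 0 <= real (Hm_norm m f).
Proof.
  unfold Hm_norm. destruct (Hm_norm_sq m f); simpl; intros H;
    [apply sqrt_pos | discriminate | discriminate].
Qed.

Theorem lemmaA2 (alpha0 kappa b m Cm Lm : R) (n : R3 -> C) :
  0 < alpha0 < 1 ->
  0 < kappa -> 0 < b -> 7 / 2 < m ->
  embedding_const m Lm ->
  in_D alpha0 b n ->
  is_finite (Hm_norm m n) ->
  Rbar_le (Hm_norm m n) (Finite Cm) ->
  forall x : R3, in_ball PI x ->
    Rbar_le (spec_norm (Qmat kappa n x))
            (Finite (15 * (1 + kappa ^ 2) * / b ^ 2 * (Lm * Cm) ^ 2)).
Proof.
  intros _ Hkappa Hb _ HL HD Hfin HCm x Hx.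
  pose proof (in_D_le_1 _ _ _ HD) as Hb1.
  pose proof (embedding_bound_ge_1 _ _ _ _ _ HL HD Hfin) as HM1.
  pose proof (Hm_norm_nonneg _ _ Hfin) as HN0.
  rewrite <- Hfin in HCm. simpl in HCm.
  set (M := Lm * real (Hm_norm m n)) in *.
  assert (HMC : M <= Lm * Cm).
  { unfold M in *. apply Rmult_le_compat_l; [|assumption].
    destruct (Rle_lt_dec 0 Lm); [assumption|nra]. }
  destruct HD as [[Hcont [Hex _]] [_ [Hre _]]].
  destruct (HL n Hcont Hfin x (in_ball_in_cube x Hx)) as [Hn Hder]. fold M in Hn, Hder.
  eapply spec_norm_le_block_bound.
  - exact (Qmat_entry_sq_le kappa b M n x Hkappa Hb Hre Hex Hn
             (fun i Hi => proj1 (proj2 (Hder i Hi)))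
             (fun i j Hi Hj => proj2 (proj2 (Hder i Hi)) j Hj)).
  - apply Qmat_block_sum_le; lra.
Qed.
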